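(* Let $S=\{x_1,\ldots,x_n\}$ be a factor-closed set of $n$ distinct positive integers, let $m\ge1$, $\boldsymbol\gamma=(\gamma_1,\ldots,\gamma_m)\in\mathbb{N}^m$, $f_1,\ldots,f_{m+1}$ arithmetic functions, and $\xi:\mathbb{N}^m\to\mathbb{C}$ an arbitrary function. Let $I=\{2,3,\ldots,m+1\}$ if $m$ is even and $I=\{1,2,\ldots,m+1\}$ if $m$ is odd. Then \[ \det_I\bigl(S^{\boldsymbol\gamma,\xi}_{f_1,\ldots,f_{m+1}}(x_{i_1},\ldots,x_{i_{m+1}})\bigr)_{1\le i_1,\ldots,i_{m+1}\le n}=\bigl(f_1(1)\cdots f_m(1)\bigr)^n\prod_{v=1}^n\xi(x_v,\ldots,x_v)\,f_{m+1}^{[\operatorname{lcm}(\gamma_1,\ldots,\gamma_m)]}(x_v). \]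
   Context: A set $S$ of positive integers is factor-closed if every positive divisor of every element of $S$ lies in $S$. An arithmetic function is a map $f:\mathbb{N}\to\mathbb{C}$, with $f(x)=0$ for $x\notin\mathbb{N}$. For $\gamma\in\mathbb{N}$, $a_\gamma(n)=1$ if $n=d^\gamma$ for some $d\in\mathbb{N}$ and $0$ otherwise, and $f^{[\gamma]}(n):=a_\gamma(n)f(n)$. The weighted multiple Ramanujan sum is \[ S^{\boldsymbol\gamma,\xi}_{f_1,\ldots,f_{m+1}}(n_1,\ldots,n_{m+1}):=\sum_{\substack{(d_1,\ldots,d_m)\in\mathbb{N}^m\\ d_j^{\gamma_j}\mid\gcd(n_1,\ldots,n_{j+1})\ (1\le j\le m)}}\xi(d_1^{\gamma_1},\ldots,d_m^{\gamma_m})\,f_1\Bigl(\frac{n_1}{d_1^{\gamma_1}}\Bigr)f_2\Bigl(\frac{d_1^{\gamma_1}}{d_2^{\gamma_2}}\Bigr)\cdots f_m\Bigl(\frac{d_{m-1}^{\gamma_{m-1}}}{d_m^{\gamma_m}}\Bigr)f_{m+1}\bigl(d_m^{\gamma_m}\bigr). \] For a $K$-dimensional matrix $A$ of order $n$ and $J\subseteq\{1,\ldots,K\}$, with $\eta_j=1$ if $j\in J$ and $0$ otherwise, the hyperdeterminant is $\det_JA:=\frac{1}{n!}\sum_{\sigma_1,\ldots,\sigma_K\in\mathfrak{S}_n}\prod_{j=1}^K\mathrm{sgn}(\sigma_j)^{\eta_j}\prod_{v=1}^nA(\sigma_1(v),\ldots,\sigma_K(v))$, $\mathfrak{S}_n$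 the symmetric group on $\{1,\ldots,n\}$. *)

From HB Require Import structures.
From mathcomp Require Import all_boot all_order all_algebra all_fingroup.
From mathcomp Require Import complex.
From mathcomp Require Import Rstruct.
Set Implicit Arguments. Unset Strict Implicit. Unset Printing Implicit Defensive.
Import Order.TTheory GRing.Theory Num.Theory.
Local Open Scope ring_scope.

Definition C : numClosedFieldType := (Rdefinitions.R)[i].

(* An arithmetic function is f : nat -> C (only its values on positive
   integers matter).  [argq f a b] is f(a/b) for a rational argument a/b,
   a, b natural: it is f(a %/ b) when a/b is a positive integer, else 0
   (since arithmetic functions vanish outside N = {1,2,...}). *)
Definition argq (f : nat -> C) (a b : nat) : C :=
  if [&& 0 < a, 0 < b & b %| a]%N then f (a %/ b)%N else 0.

(* a_gamma(n) = 1 iff n = d^gamma for some positive integer d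
   (for n >= 1 such a d satisfies d <= n, so the search is bounded). *)
Definition is_pow (g n : nat) : bool :=
  [exists d : 'I_n.+1, (0 < d)%N && (d ^ g == n)%N].

Definition fpow (g : nat) (f : nat -> C) (n : nat) : C :=
  if is_pow g n then f n else 0.

(* gcd(n_1, ..., n_{j+1}) (0-indexed: gcd of ns k for k <= j) *)
Definition gcd_upto m (ns : 'I_m.+1 -> nat) (j : nat) : nat :=
  \big[gcdn/0%N]_(k < m.+1 | (k <= j)%N) ns k.

Definition dpow m (g : 'I_m -> nat) (d : 'I_m -> nat) (i : nat) : nat :=
  oapp (fun j : 'I_m => (d j) ^ (g j))%N 1%N (insub i).

(* e_0 = n_1, e_k = d_k^{gamma_k} (1<=k<=m), e_{m+1} = 1, so that the
   summand product is  prod_{k=1}^{m+1} f_k(e_{k-1}/e_k). *)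
Definition echain m (g : 'I_m -> nat) (ns : 'I_m.+1 -> nat) (d : 'I_m -> nat)
    (k : nat) : nat :=
  if k == 0%N then ns ord0 else dpow g d k.-1.

(* The tuple (d_1..d_m) ranges over positive integers with
   d_j^{gamma_j} | gcd(n_1..n_{j+1}); for n_1 >= 1 and gamma_j >= 1 this forces
   d_j <= n_1, so the sum over d_j in [0, n_1] (with d_j > 0) is the full sum. *)
Definition wmrs m (g : 'I_m -> nat) (xi : {ffun 'I_m -> nat} -> C)
    (f : 'I_m.+1 -> nat -> C) (ns : 'I_m.+1 -> nat) : C :=
  \sum_(d : {ffun 'I_m -> 'I_(ns ord0).+1} |
          [forall j : 'I_m, (0 < d j)%N && ((d j) ^ (g j) %| gcd_upto ns j.+1)%N])
    xi [ffun j => ((d j) ^ (g j))%N] *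
    \prod_(k < m.+1) argq (f k) (echain g ns (fun j => d j) k)
                                (echain g ns (fun j => d j) k.+1).

Definition hdet K n (J : {set 'I_K}) (A : {ffun 'I_K -> 'I_n} -> C) : C :=
  (n`!%:R)^-1 *
  \sum_(s : {ffun 'I_K -> {perm 'I_n}})
     (\prod_(j in J) (-1) ^+ (odd_perm (s j))) *
     \prod_(v < n) A [ffun j => s j v].

Definition factor_closed n (x : 'I_n -> nat) : Prop :=
  forall (i : 'I_n) (d : nat), (0 < d)%N -> (d %| x i)%N -> exists j, x j = d.

From HB Require Import structures.
From mathcomp Require Import all_boot all_order all_algebra all_fingroup.
Import GRing.Theory Num.Theory.
Local Open Scope ring_scope.
Set Implicit Arguments. Unset Strict Implicit.

(* Put e_j = d_j^g_j.  Since S is factor-closed, each admissible chain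
   (n_1, e_1, ..., e_m) is indexed by a tuple k of indices into S with
   x_(k_0) = n_1 and x_(k_j) = e_j.  A summand vanishes unless the chain
   decreases for divisibility, and then the gcd conditions reduce to
   x_(k_j) | n_(j+1).  So the tensor of sums is the contraction of a core
   tensor W(k) with the identity matrix in the first direction and with the
   divisibility matrix D = ([x_b | x_a])_(a,b) in all other directions.
   The hyperdeterminant is multiplicative under such a contraction (a
   Cauchy-Binet formula; the unsigned first direction when m is even is
   harmless because its matrix is the identity), and det D = 1 because D is
   unitriangular once S is ordered.  Finally W(k) vanishes unless
   x_(k_j) <= x_(k_0) for all j, which forces all permutations in det_I W to
   coincide; since |I| is even their signs cancel, leaving the product of the
   diagonal entries W(v, ..., v).  There x_v is a g_j-th power for every j
   iff it is an lcm(g)-th power. *)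

Lemma is_powP g y : (0 < g)%N -> (0 < y)%N ->
  reflect (exists2 d, (0 < d)%N & (d ^ g)%N = y) (is_pow g y).
Proof.
move=> g_gt0 y_gt0; apply: (iffP existsP) => [[d /andP[d_gt0 /eqP <-]] | [d d_gt0 dy]].
  by exists d.
have d_lt : (d < y.+1)%N by rewrite ltnS -dy -{1}(expn1 d) leq_pexp2l.
by exists (Ordinal d_lt); rewrite /= d_gt0 dy eqxx.
Qed.

(* The g-th root is assembled prime by prime from the factorization of y. *)
Lemma is_pow_lognP g y : (0 < g)%N -> (0 < y)%N ->
  reflect (forall p, (g %| logn p y)%N) (is_pow g y).
Proof.
move=> g_gt0 y_gt0; apply: (iffP (is_powP g_gt0 y_gt0)) => [[d _ <-] p | g_dvd].
  by rewrite lognX dvdn_mulr.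
exists (\prod_(p <- primes y) p ^ (logn p y %/ g))%N.
  rewrite big_seq; apply: prodn_cond_gt0 => p.
  by rewrite mem_primes => /andP[/prime_gt0 p_gt0 _]; rewrite expn_gt0 p_gt0.
rewrite (big_morph (fun a => a ^ g)%N (fun a b => expnMn a b g) (exp1n g)).
rewrite {3}(prod_prime_decomp y_gt0) prime_decompE big_map /=.
by apply: eq_bigr => p _; rewrite -expnM divnK.
Qed.

Lemma is_pow_biglcm (I : finType) (g : I -> nat) y :
  (forall j, 0 < g j)%N -> (0 < y)%N ->
  [forall j, is_pow (g j) y] = is_pow (\big[lcmn/1%N]_j g j) y.
Proof.
move=> g_gt0 y_gt0.
have L_gt0 : (0 < \big[lcmn/1%N]_j g j)%N.
  by apply: (big_ind (fun a => 0 < a)%N) => // a b a0 b0; rewrite lcmn_gt0 a0 b0.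
apply/forallP/(is_pow_lognP L_gt0 y_gt0) => [pow_g p | L_dvd j].
  by apply/dvdn_biglcmP => j _; apply/(is_pow_lognP (g_gt0 j) y_gt0).
apply/(is_pow_lognP (g_gt0 j) y_gt0) => p.
exact: dvdn_trans (biglcmn_sup j _ (dvdnn _)) (L_dvd p).
Qed.

Lemma prod_natb (I : finType) (P : pred I) :
  \prod_i (P i)%:R = [forall i, P i]%:R :> C.
Proof.
have -> : [forall i, P i] = \big[andb/true]_i P i by rewrite big_andE.
have natrb_and (a b : bool) : (a && b)%:R = a%:R * b%:R :> C by rewrite -mulnb natrM.
by rewrite (big_morph (fun b : bool => b%:R : C) natrb_and (erefl : true%:R = 1 :> C)).
Qed.

(* [bigA_distr_bigA] returns big operators over the [Monoid] instances of the
   ring operations, which [big_split] and its relatives do not recognise. *)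
Lemma prodr_sum (R : pzSemiRingType) (I J : finType) (F : I -> J -> R) :
  \prod_i \sum_j F i j = \sum_(f : {ffun I -> J}) \prod_i F i (f i).
Proof. exact: bigA_distr_bigA. Qed.

Lemma perm_eq_of_le n (x : 'I_n -> nat) (p q : {perm 'I_n}) :
  injective x -> (forall v, x (p v) <= x (q v))%N -> p = q.
Proof.
move=> x_inj le_pq.
have sum_perm (s : {perm 'I_n}) : (\sum_v x (s v) = \sum_v x v)%N.
  by rewrite [RHS](reindex_inj (@perm_inj _ s)).
have : (\sum_v (x (q v) - x (p v)) == 0)%N.
  by rewrite (sumnB _ (fun v _ => le_pq v)) !sum_perm subnn.
rewrite sum_nat_eq0 => /forallP eq_pq; apply/permP => v; apply: x_inj.
by apply/eqP; rewrite eqn_leq le_pq -subn_eq0; exact: eq_pq v.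
Qed.

Lemma det_rowsub (R : comPzRingType) n (M : 'M[R]_n) (t : 'I_n -> 'I_n) :
  \det (rowsub t M) = \sum_(p : {perm 'I_n} | [forall v, p v == t v]) (-1) ^+ p * \det M.
Proof.
have [/injectiveP t_inj | /injectivePn [v1 [v2 ne_v12 eq_t]]] := boolP (injectiveb t).
  rewrite (big_pred1 (perm t_inj)); last first.
    move=> p; apply/forallP/eqP => [eq_pt | -> v]; last by rewrite permE.
    by apply/permP => v; rewrite permE; apply/eqP.
  have -> : rowsub t M = row_perm (perm t_inj) M.
    by apply/matrixP => i j; rewrite !mxE permE.
  by rewrite row_permE det_mulmx det_perm.
rewrite big_pred0 => [|p]; last first.
  apply: contra_neqF ne_v12 => /forallP eq_pt; apply: (@perm_inj _ p).
  by rewrite (eqP (eq_pt v1)) (eqP (eq_pt v2)) eq_t.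
by apply: (determinant_alternate ne_v12) => w; rewrite !mxE eq_t.
Qed.

Section Hyperdeterminant.

Variables (K n : nat) (J : {set 'I_K}).

Lemma eq_hdet (A B : {ffun 'I_K -> 'I_n} -> C) : A =1 B -> hdet J A = hdet J B.
Proof.
move=> eqAB; rewrite /hdet; congr (_ * _); apply: eq_bigr => s _.
by congr (_ * _); apply: eq_bigr => v _; rewrite eqAB.
Qed.

Definition hsign (j : 'I_K) (p : {perm 'I_n}) : C := if j \in J then (-1) ^+ p else 1.

Lemma prod_hsign (s : {ffun 'I_K -> {perm 'I_n}}) :
  \prod_(j in J) (-1) ^+ s j = \prod_j hsign j (s j).
Proof. by rewrite big_mkcond. Qed.

Lemma sum_hsign_prod_mx j (M : 'M[C]_n) (t : 'I_n -> 'I_n) :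
  (j \notin J -> M = 1%:M) ->
  \sum_(p : {perm 'I_n}) hsign j p * \prod_v M (p v) (t v)
  = \sum_(p : {perm 'I_n} | [forall v, p v == t v]) hsign j p * \det M.
Proof.
rewrite /hsign; have [_ _ | _ /(_ isT) ->] := boolP (j \in J); last first.
  rewrite det1 [RHS]big_mkcond; apply: eq_bigr => p _; rewrite mul1r mulr1.
  by under eq_bigr do rewrite mxE; rewrite prod_natb; case: ifP.
rewrite -[\det M]det_tr -(det_rowsub M^T t) /determinant; apply: eq_bigr => p _.
by congr (_ * _); apply: eq_bigr => v _; rewrite !mxE.
Qed.

Lemma hdet_contract (M : 'I_K -> 'M[C]_n) (W : {ffun 'I_K -> 'I_n} -> C) :
  (forall j, j \notin J -> M j = 1%:M) ->
  hdet J (fun i => \sum_(k : {ffun 'I_K -> 'I_n}) (\prod_j M j (i j) (k j)) * W k)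
  = (\prod_j \det (M j)) * hdet J W.
Proof.
move=> M1; rewrite /hdet mulrCA; congr (_ * _).
pose tr (q : {ffun 'I_K -> {perm 'I_n}}) := [ffun v => [ffun j => q j v]].
transitivity (\sum_(kk : {ffun 'I_n -> {ffun 'I_K -> 'I_n}}) (\prod_v W (kk v)) *
    \prod_j \sum_(p : {perm 'I_n}) hsign j p * \prod_v M j (p v) (kk v j)).
  under eq_bigr do rewrite prod_hsign prodr_sum mulr_sumr.
  rewrite exchange_big; apply: eq_bigr => kk _; rewrite prodr_sum mulr_sumr.
  apply: eq_bigr => s _; rewrite !big_split [in RHS]exchange_big.
  rewrite mulrA mulrC; congr (_ * (_ * _)).
  by apply: eq_bigr => v _; apply: eq_bigr => j _; rewrite ffunE.
transitivity (\sum_kk \sum_(q | kk == tr q)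
    (\prod_v W (kk v)) * \prod_j (hsign j (q j) * \det (M j))).
  apply: eq_bigr => kk _.
  under [X in _ * X = _]eq_bigr => j _ do rewrite (sum_hsign_prod_mx (fun v => kk v j) (M1 j)).
  rewrite bigA_distr_big_dep mulr_sumr; apply: eq_bigl => q.
  apply/familyP/eqP => [eq_q | -> j]; last by apply/forallP => v; rewrite !ffunE.
  by apply/ffunP => v; apply/ffunP => j; rewrite !ffunE; apply/esym/eqP/(forallP (eq_q j)).
rewrite (exchange_big_dep xpredT) // mulr_sumr; apply: eq_bigr => q _.
rewrite (big_pred1 (tr q)) //.
have -> : \prod_v W (tr q v) = \prod_v W [ffun j => q j v].
  by apply: eq_bigr => v _; rewrite ffunE.
by rewrite big_split prod_hsign mulrC -mulrA mulrCA.
Qed.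

End Hyperdeterminant.

(* Only constant tuples of permutations contribute, each with sign
   ((-1)^p)^|J| = 1. *)
Lemma hdet_diag K n (J : {set 'I_K.+1}) (x : 'I_n -> nat) (W : {ffun 'I_K.+1 -> 'I_n} -> C) :
  injective x -> ~~ odd #|J| ->
  (forall k, W k != 0 -> forall j, (x (k j) <= x (k ord0))%N) ->
  hdet J W = \prod_v W [ffun => v].
Proof.
move=> x_inj even_J W_dom; rewrite /hdet.
have s_const (s : {ffun 'I_K.+1 -> {perm 'I_n}}) :
    \prod_v W [ffun j => s j v] != 0 -> s = [ffun => s ord0].
  move=> /prodf_neq0 Ws_neq0; apply/ffunP => j; rewrite ffunE.
  by apply: perm_eq_of_le x_inj _ => v; have := W_dom _ (Ws_neq0 v isT) j; rewrite !ffunE.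
rewrite -(big_rmcond (fun s : {ffun 'I_K.+1 -> {perm 'I_n}} => s == [ffun => s ord0]))
  => [|s /eqP s_nconst]; last first.
  have [-> | /s_const //] := eqVneq (\prod_v W [ffun j => s j v]) 0; exact: mulr0.
rewrite (partition_big (fun s : {ffun 'I_K.+1 -> {perm 'I_n}} => s ord0) xpredT) //=.
have diag_term (p : {perm 'I_n}) :
    \sum_(s : {ffun 'I_K.+1 -> {perm 'I_n}} | (s == [ffun => s ord0]) && (s ord0 == p))
      (\prod_(j in J) (-1) ^+ s j) * \prod_v W [ffun j => s j v]
    = \prod_v W [ffun => v].
  rewrite (big_pred1 [ffun => p]) => [|s]; last first.
    by apply/andP/eqP => [[/eqP e /eqP e0] | ->]; [rewrite e e0 | rewrite !ffunE].
  under eq_bigr do rewrite ffunE.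
  rewrite prodr_const -exprM -signr_odd oddM (negbTE even_J) andbF mul1r.
  rewrite [RHS](reindex_inj (@perm_inj _ p)); apply: eq_bigr => v _.
  by congr W; apply/ffunP => j; rewrite !ffunE.
rewrite (eq_bigr _ (fun p _ => diag_term p)) sumr_const card_Sn -[X in _ * X]mulr_natl mulrA.
by rewrite mulVf ?mul1r // pnatr_eq0 -lt0n fact_gt0.
Qed.

Lemma argqnn (F : nat -> C) a : (0 < a)%N -> argq F a a = F 1%N.
Proof. by move=> a_gt0; rewrite /argq a_gt0 dvdnn divnn a_gt0. Qed.

Lemma argqn1 (F : nat -> C) a : (0 < a)%N -> argq F a 1 = F a.
Proof. by move=> a_gt0; rewrite /argq a_gt0 dvd1n divn1. Qed.

Section WeightedRamanujanSum.

Variables (n m : nat) (x : 'I_n -> nat).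
Variables (g : 'I_m -> nat) (f : 'I_m.+1 -> nat -> C) (xi : {ffun 'I_m -> nat} -> C).
Hypotheses (x_inj : injective x) (x_gt0 : forall v, (0 < x v)%N).
Hypotheses (x_fclosed : factor_closed x) (g_gt0 : forall j, (0 < g j)%N).

Definition divmx : 'M[C]_n := \matrix_(a, b) (x b %| x a)%:R.

Lemma det_divmx : \det divmx = 1.
Proof.
rewrite [LHS]/determinant -(big_rmcond (fun s : {perm 'I_n} => s == 1%g)) => [|s s_neq1].
  rewrite big_pred1_eq odd_perm1 mul1r; under eq_bigr do rewrite mxE perm1 dvdnn.
  by rewrite big1.
under eq_bigr do rewrite mxE; rewrite prod_natb.
case: forallP => [dvd_s|]; last by rewrite mulr0.
suff s1 : s = 1%g by rewrite s1 eqxx in s_neq1.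
apply: (perm_eq_of_le x_inj) => v; rewrite perm1.
exact: dvdn_leq (x_gt0 v) (dvd_s v).
Qed.

Definition wmrs_factor (j : 'I_m.+1) : 'M[C]_n := if j == ord0 then 1%:M else divmx.

Lemma prod_wmrs_factor (i k : {ffun 'I_m.+1 -> 'I_n}) :
  \prod_j wmrs_factor j (i j) (k j)
  = ((k ord0 == i ord0) && [forall j : 'I_m, x (k (lift ord0 j)) %| x (i (lift ord0 j))]%N)%:R.
Proof.
rewrite big_ord_recl /wmrs_factor eqxx mxE eq_sym -mulnb natrM -prod_natb.
by congr (_ * _); apply: eq_bigr => j _; rewrite eq_sym (negbTE (neq_lift _ _)) mxE.
Qed.

Lemma det_wmrs_factor j : \det (wmrs_factor j) = 1.
Proof. by rewrite /wmrs_factor; case: eqP => _; rewrite ?det1 ?det_divmx. Qed.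

(* The chain [x (k 0), ..., x (k m), 1] plays the role of [n_1, d_1^g_1, ..., d_m^g_m, 1]
   in [echain]. *)
Definition xchain (k : {ffun 'I_m.+1 -> 'I_n}) (l : nat) : nat :=
  if l is l'.+1 then oapp (fun j => x (k (lift ord0 j))) 1%N (insub l') else x (k ord0).

Lemma xchain_ord k (j : 'I_m.+1) : xchain k j = x (k j).
Proof. by case: (unliftP ord0 j) => [j' -> | ->] //=; rewrite add0n valK. Qed.

Definition wmrs_term (k : {ffun 'I_m.+1 -> 'I_n}) : C :=
  xi [ffun j => x (k (lift ord0 j))] * \prod_(l < m.+1) argq (f l) (xchain k l) (xchain k l.+1).

Definition wmrs_core (k : {ffun 'I_m.+1 -> 'I_n}) : C :=
  [forall j, is_pow (g j) (x (k (lift ord0 j)))]%:R * wmrs_term k.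

Lemma wmrs_term_dvd k : wmrs_term k != 0 ->
  forall a b : 'I_m.+1, (a <= b)%N -> (x (k b) %| x (k a))%N.
Proof.
rewrite mulf_eq0 negb_or => /andP[_ /prodf_neq0 argq_neq0].
have step (l : 'I_m.+1) : (xchain k l.+1 %| xchain k l)%N.
  by move: (argq_neq0 l isT); rewrite /argq; case: and3P => [[_ _ ->] | _] //; rewrite eqxx.
suff dvd_chain (a b : nat) : (a <= b <= m)%N -> (xchain k b %| xchain k a)%N.
  by move=> a b ab; rewrite -!xchain_ord dvd_chain // ab -ltnS ltn_ord.
elim: b => [|b IHb] /andP[ab bm]; first by rewrite leqn0 in ab; rewrite (eqP ab).
case: (ltngtP a b.+1) ab => // [ab _ | -> _] //.
apply: dvdn_trans (step (Ordinal (leqW bm))) _.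
by apply: IHb; rewrite -ltnS ab ltnW.
Qed.

Lemma wmrs_core_le k : wmrs_core k != 0 -> forall j, (x (k j) <= x (k ord0))%N.
Proof.
rewrite mulf_eq0 negb_or => /andP[_ /wmrs_term_dvd k_dvd] j.
exact: dvdn_leq (x_gt0 _) (k_dvd ord0 j (leq0n _)).
Qed.

Lemma wmrs_core_const v :
  wmrs_core [ffun => v]
  = (\prod_(j < m) f (widen_ord (leqnSn m) j) 1%N) *
    (xi [ffun => x v] * fpow (\big[lcmn/1%N]_(j < m) g j) (f ord_max) (x v)).
Proof.
have xchain_const (l : nat) : (l <= m)%N -> xchain [ffun => v] l = x v.
  by case: l => [|l] l_le; rewrite /xchain ?insubT //= ffunE.
have xchain_last : xchain [ffun => v] m.+1 = 1%N by rewrite /xchain insubF ?ltnn.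
rewrite /wmrs_core /wmrs_term /fpow -is_pow_biglcm //.
have -> : [forall j, is_pow (g j) (x ([ffun => v] (lift ord0 j)))] = [forall j, is_pow (g j) (x v)].
  by apply: eq_forallb => j; rewrite ffunE.
have -> : [ffun j => x ([ffun => v] (lift ord0 j))] = [ffun => x v] :> {ffun 'I_m -> nat}.
  by apply/ffunP => j; rewrite !ffunE.
rewrite big_ord_recr xchain_const // xchain_last argqn1 //.
rewrite (eq_bigr (fun l => f (widen_ord (leqnSn m) l) 1%N)) => [|l _]; last first.
  by have l_lt := ltn_ord l; rewrite !xchain_const ?argqnn // ltnW.
by case: ifP => _; rewrite ?mul1r ?mul0r ?mulr0 // mulrCA.
Qed.

Section Contraction.

Variable i : {ffun 'I_m.+1 -> 'I_n}.

Definition wmrs_index (d : {ffun 'I_m -> 'I_(x (i ord0)).+1}) : bool :=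
  [forall j, (0 < d j)%N && (d j ^ g j %| gcd_upto (fun l => x (i l)) j.+1)%N].

Definition represents (d : {ffun 'I_m -> 'I_(x (i ord0)).+1}) (k : {ffun 'I_m.+1 -> 'I_n}) : bool :=
  (k ord0 == i ord0) && [forall j, x (k (lift ord0 j)) == d j ^ g j]%N.

Lemma echain_xchain d k : represents d k ->
  echain g (fun l => x (i l)) (fun j => d j) =1 xchain k.
Proof.
case/andP=> /eqP k0 /forallP kd [|l] /=; first by rewrite /echain k0.
by rewrite /echain /dpow /=; case: insub => //= j; rewrite (eqP (kd j)).
Qed.

Lemma wmrs_summand_represented d : wmrs_index d ->
  xi [ffun j => (d j ^ g j)%N] *
    \prod_(l < m.+1) argq (f l) (echain g (fun l => x (i l)) (fun j => d j) l)
                                (echain g (fun l => x (i l)) (fun j => d j) l.+1)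
  = \sum_(k | represents d k) wmrs_term k.
Proof.
move=> /forallP d_index.
have /fin_all_exists [a xa] j : exists a : 'I_n, x a = (d j ^ g j)%N.
  have /andP[d_gt0 d_dvd] := d_index j.
  have dg_gt0 : (0 < d j ^ g j)%N by rewrite expn_gt0 d_gt0.
  exact: x_fclosed dg_gt0 (dvdn_trans d_dvd (biggcdn_inf ord0 _ (dvdnn _))).
pose k0 := [ffun l => if unlift ord0 l is Some j then a j else i ord0].
rewrite (big_pred1 k0) => [|k]; last first.
  apply/andP/eqP => [[/eqP k0_eq /forallP kd] | ->].
    apply/ffunP => l; rewrite ffunE; case: unliftP => [j -> | ->] //.
    by apply: x_inj; rewrite xa (eqP (kd j)).
  by rewrite !ffunE unlift_none; split=> //; apply/forallP => j; rewrite ffunE liftK xa.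
have k0_repr : represents d k0.
  by rewrite /represents !ffunE unlift_none eqxx; apply/forallP => j; rewrite ffunE liftK xa.
rewrite /wmrs_term; congr (xi _ * _).
  by apply/ffunP => j; rewrite !ffunE liftK xa.
by apply: eq_bigr => l _; rewrite !(echain_xchain k0_repr).
Qed.

Lemma represents_inj d1 d2 k : represents d1 k -> represents d2 k -> d1 = d2.
Proof.
move=> /andP[_ /forallP kd1] /andP[_ /forallP kd2]; apply/ffunP => j; apply: val_inj.
by apply/eqP; rewrite -(eqn_exp2r _ _ (g_gt0 j)) -(eqP (kd1 j)) -(eqP (kd2 j)).
Qed.

Lemma exists_represented k : wmrs_term k != 0 ->
  [exists d, wmrs_index d && represents d k]
  = [&& k ord0 == i ord0, [forall j, x (k (lift ord0 j)) %| x (i (lift ord0 j))]%N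
      & [forall j, is_pow (g j) (x (k (lift ord0 j)))]].
Proof.
move=> term_neq0; have k_dvd := wmrs_term_dvd term_neq0.
apply/existsP/and3P => [[d /andP[/forallP d_index /andP[/eqP k0 /forallP kd]]] |
                        [/eqP k0 /forallP ki_dvd /forallP k_pow]].
  split; [by rewrite k0 | apply/forallP => j | apply/forallP => j].
    have /andP[_ d_dvd] := d_index j; rewrite (eqP (kd j)).
    exact: dvdn_trans d_dvd (biggcdn_inf (lift ord0 j) _ (dvdnn _)).
  apply/(is_powP (g_gt0 j) (x_gt0 _)); exists (d j); first by case/andP: (d_index j).
  exact/esym/eqP/kd.
have /fin_all_exists [r r_root] j :
    exists r : 'I_(x (i ord0)).+1, (0 < r)%N && (x (k (lift ord0 j)) == r ^ g j)%N.
  have /(is_powP (g_gt0 j) (x_gt0 _)) [r r_gt0 rk] := k_pow j.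
  have r_lt : (r < (x (i ord0)).+1)%N.
    rewrite ltnS -k0 (@leq_trans (r ^ g j)) //; first by rewrite -{1}(expn1 r) leq_pexp2l.
    by rewrite rk; apply: dvdn_leq (x_gt0 _) (k_dvd ord0 (lift ord0 j) (leq0n _)).
  by exists (Ordinal r_lt); rewrite r_gt0 rk eqxx.
exists [ffun j => r j]; apply/andP; split; last first.
  by rewrite /represents k0 eqxx; apply/forallP => j; rewrite ffunE; case/andP: (r_root j).
apply/forallP => j; rewrite ffunE; have /andP[-> /eqP <-] := r_root j.
apply/dvdn_biggcdP => l; case: (unliftP ord0 l) => [l' -> | ->] l_le; last first.
  by rewrite -k0; apply: (k_dvd ord0 (lift ord0 j)) (leq0n _).
exact: dvdn_trans (k_dvd (lift ord0 l') (lift ord0 j) l_le) (ki_dvd l').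
Qed.

Lemma wmrs_contract :
  wmrs g xi f (fun l => x (i l))
  = \sum_(k : {ffun 'I_m.+1 -> 'I_n}) (\prod_j wmrs_factor j (i j) (k j)) * wmrs_core k.
Proof.
rewrite /wmrs (eq_bigr _ wmrs_summand_represented).
rewrite (exchange_big_dep xpredT) //; apply: eq_bigr => k _.
rewrite prod_wmrs_factor /wmrs_core mulrA -natrM mulnb -andbA.
have [-> | term_neq0] := eqVneq (wmrs_term k) 0; first by rewrite mulr0 big1.
rewrite -exists_represented //.
case: (pickP (fun d => wmrs_index d && represents d k)) => [d d_repr | no_d]; last first.
  rewrite big_pred0 //; case: existsP => [[d] | _]; [by rewrite no_d | by rewrite mul0r].
have -> : [exists d, wmrs_index d && represents d k] by apply/existsP; exists d.
rewrite mul1r (big_pred1 d) // => d'; apply/idP/eqP => [/andP[_ d'_repr] | -> //].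
by case/andP: d_repr => _ /(represents_inj d'_repr).
Qed.

End Contraction.

End WeightedRamanujanSum.

Theorem corollary4p8 (n m : nat) (x : 'I_n -> nat)
    (g : 'I_m -> nat) (f : 'I_m.+1 -> nat -> C) (xi : {ffun 'I_m -> nat} -> C) :
  injective x ->
  (forall i, (0 < x i)%N) ->
  factor_closed x ->
  (1 <= m)%N ->
  (forall j, (0 < g j)%N) ->
  let I : {set 'I_m.+1} :=
    if odd m then [set: 'I_m.+1] else [set j : 'I_m.+1 | j != ord0] in
  hdet I (fun i : {ffun 'I_m.+1 -> 'I_n} => wmrs g xi f (fun k => x (i k)))
  = (\prod_(j < m) f (widen_ord (leqnSn m) j) 1%N) ^+ n *
    \prod_(v < n) (xi [ffun => x v] *
                   fpow (\big[lcmn/1%N]_(j < m) g j) (f ord_max) (x v)).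
Proof.
move=> x_inj x_gt0 x_fclosed _ g_gt0 I.
have I_factor j : j \notin I -> wmrs_factor x j = 1%:M.
  by rewrite /I /wmrs_factor; case: ifP => _; rewrite !inE // negbK => ->.
have I_even : ~~ odd #|I|.
  rewrite /I; case: ifP => m_odd; first by rewrite cardsT card_ord /= m_odd.
  have -> : [set j : 'I_m.+1 | j != ord0] = [set~ ord0] by apply/setP => j; rewrite !inE.
  by rewrite cardsC1 card_ord /= m_odd.
rewrite (eq_hdet _ (wmrs_contract f xi x_inj x_gt0 x_fclosed g_gt0)) hdet_contract //.
rewrite big1 ?mul1r => [|j _]; last exact: det_wmrs_factor x_inj x_gt0 j.
rewrite (hdet_diag x_inj I_even (wmrs_core_le x_gt0)).
under eq_bigr do rewrite wmrs_core_const //.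
by rewrite big_split prodr_const card_ord.
Qed.
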